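(* Let $x_0\in X$ be a regular point. Define $\Phi:\Omega_{x_0}\to\partial\mathcal T(x_0)$ by sending $(x_0,x_1,x_2,\dots)\in\Omega_{x_0}$ to the equivalence class in $\partial\mathcal T(x_0)$ of the sequence $\{x_n\}_{n\ge0}$. Then $\Phi$ is well defined and is a bijective homeomorphism of $\Omega_{x_0}$ onto $\partial\mathcal T(x_0)$. Moreover, for $x\in\mathcal T(x_0)$ and $(x_0,x_1,\dots)\in\Omega_{x_0}$, $$K(x,\Phi(x_0,x_1,\dots))=\begin{cases}\dfrac{1}{W(x_1)W(x_2)\cdots W(x_n)}, & \text{if } x=x_n \text{ for some } n\ge0,\\ 0,&\text{otherwise,}\end{cases}$$ where for $n=0$ the empty product is $1$.
   Context: $X$ is a compact metric space, $r:X\to X$ a finite-to-one, onto, Borel map, $m_0$ a Borel function with $\frac{1}{\#r^{-1}(x)}\sum_{r(y)=x}|m_0(y)|^2=1$, and $W(x)=|m_0(x)|^2/\#r^{-1}(r(x))$. A point $x_0$ is regular if the sets $r^{-n}(x_0)$, $n\in\mathbb N$, are mutually disjoint and no $r^{-n}(x_0)$, $n\ge0$, meets the zero set of $W$. $\mathcal T(x_0)=\bigcup_{n\ge0}r^{-n}(x_0)$; $n(x)$ is the unique $n\ge0$ with $r^n(x)=x_0$; for $x\in\mathcal T(x_0)$, $\mathcal T(x)=\bigcup_{n\ge0}r^{-n}(x)$. $\Omega_{x_0}=\{(x_0,x_1,\dots): r(x_{n+1})=x_n\ \forall n\ge0\}$ with the topology whose basic open sets are the cylinders $V_{x_0,\dots,x_n}=\{(z_k)\in\Omega_{x_0}: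 z_0=x_0,\dots,z_n=x_n\}$. Transition probabilities $p(x,y)=W(y)$ if $r(y)=x$ and $0$ otherwise, $p_n$ its $n$-th matrix power, Green function $g(x,y)=\sum_{n\ge0}p_n(x,y)$, Martin kernel $K(x,y)=g(x,y)/g(x_0,y)$ for $x,y\in\mathcal T(x_0)$. Let $C_x=1/(W(x)W(r(x))\cdots W(r^{n(x)-1}(x)))$ (so $0\le K(x,\cdot)\le C_x$). Fix $D:\mathcal T(x_0)\to(0,\infty)$ with $\sum_qD(q)<\infty$ and define the metric $\rho(x,y)=\sum_{q\in\mathcal T(x_0)}D(q)\frac{|K(q,x)-K(q,y)|+|\delta_{qx}-\delta_{qy}|}{C_q+1}$ on $\mathcal T(x_0)$. The Martin compactification $\widehat{\mathcal T}(x_0)$ is the completion of $(\mathcal T(x_0),\rho)$ and the Martin boundary is $\partial\mathcal T(x_0)=\widehat{\mathcal T}(x_0)\setminus\mathcal T(x_0)$; its points are equivalence classes of $\rho$-Cauchy sequences $\{y_n\}$ that eventually leave every finite set and for which $\lim_nK(x,y_n)$ exists for all $x\in\mathcal T(x_0)$. Each $K(x,\cdot)$ extends uniquely continuously to $\widehat{\mathcal T}(x_0)$, denoted again $K(x,\cdot)$. *)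

From HB Require Import structures.
From mathcomp Require Import all_boot all_order all_algebra.
From mathcomp Require Import complex finmap.
From mathcomp Require Import all_classical all_reals all_analysis.

Set Implicit Arguments.
Unset Strict Implicit.
Unset Printing Implicit Defensive.

Import Order.TTheory GRing.Theory Num.Theory.
Import numFieldNormedType.Exports.

Local Open Scope classical_set_scope.
Local Open Scope ring_scope.

Definition borel_set (T : topologicalType) (A : set T) : Prop := <<s open >> A.

Definition borel_fun (T U : topologicalType) (f : T -> U) : Prop :=
  forall B : set U, borel_set B -> borel_set (f @^-1` B).

Section Martin.
Variables (R : realType) (X : metricType R).
Variables (r : X -> X) (m0 : X -> R[i]) (x0 : X) (D : X -> R).

Definition sqnorm (z : R[i]) : R := (complex.Re z) ^+ 2 + (complex.Im z) ^+ 2.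

Definition npre (x : X) : nat := #|` fset_set (r @^-1` [set x])|.

Definition W (x : X) : R := sqnorm (m0 x) / (npre (r x))%:R.

Definition preim_n (n : nat) : set X := [set y | iter n r y = x0].

Definition regular : Prop :=
  (forall n m : nat, n <> m -> preim_n n `&` preim_n m = set0) /\
  (forall (n : nat) (y : X), preim_n n y -> W y != 0).

Definition tree : set X := [set y | exists n : nat, iter n r y = x0].

(* n(x): the (unique, for regular x0) n >= 0 with r^n(x) = x0 *)
Definition nlev (x : X) : nat := xget 0%N [set n | iter n r x = x0].

Definition Ccoef (x : X) : R := (\prod_(i < nlev x) W (iter i r x))^-1.

Definition pmat (x y : X) : R := if r y == x then W y else 0.

(* n-th matrix power of p, the matrix being indexed by T(x0) *)
Fixpoint pn (n : nat) (x y : X) : \bar R :=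
  match n with
  | 0 => ((x == y)%:R)%:E
  | n'.+1 => \esum_(z in tree) (pn n' x z * (pmat z y)%:E)%E
  end.

Definition green (x y : X) : \bar R := (\sum_(0 <= n <oo) pn n x y)%E.

Definition martinK (x y : X) : R := fine (green x y) / fine (green x0 y).

Definition kron (x y : X) : R := (x == y)%:R.

Definition rho (x y : X) : R :=
  fine (\esum_(q in tree)
    ((D q * (`|martinK q x - martinK q y| + `|kron q x - kron q y|)
        / (Ccoef q + 1))%:E))%E.

(* sequences in T(x0) representing points of the Martin boundary *)
Definition bdry_seq (y : nat -> X) : Prop :=
  [/\ (forall n, tree (y n)),
      (forall e : R, 0 < e -> exists N : nat,
          forall m n, (N <= m)%N -> (N <= n)%N -> rho (y m) (y n) < e),
      (forall F : set X, finite_set F ->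
          exists N : nat, forall n, (N <= n)%N -> ~ F (y n)) &
      (forall x, tree x -> exists l : R, (fun n => martinK x (y n)) @ \oo --> l)].

Definition bequiv (y z : nat -> X) : Prop :=
  (fun n => rho (y n) (z n)) @ \oo --> (0 : R).

Definition bclass (y : nat -> X) : set (nat -> X) :=
  [set z | bdry_seq z /\ bequiv y z].

(* Martin boundary: the set of equivalence classes *)
Definition boundary : set (set (nat -> X)) :=
  [set c | exists y, bdry_seq y /\ c = bclass y].

Definition rep (c : set (nat -> X)) : nat -> X := xget (fun _ => x0) c.

Definition bdist (c c' : set (nat -> X)) : R :=
  lim ((fun n => rho (rep c n) (rep c' n)) @ \oo).

Definition boundary_open (B : set (set (nat -> X))) : Prop :=
  B `<=` boundary /\
  forall c, B c -> exists e : R, 0 < e /\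
     forall c', boundary c' -> bdist c c' < e -> B c'.

Definition martinKb (x : X) (c : set (nat -> X)) : R :=
  lim ((fun n => martinK x (rep c n)) @ \oo).

Definition Omega : set (nat -> X) :=
  [set w | w 0%N = x0 /\ forall n, r (w n.+1) = w n].

Definition cyl (s : nat -> X) (n : nat) : set (nat -> X) :=
  [set w | Omega w /\ forall k, (k <= n)%N -> w k = s k].

Definition Omega_open (U : set (nat -> X)) : Prop :=
  U `<=` Omega /\
  forall w, U w -> exists (s : nat -> X) (n : nat), cyl s n w /\ cyl s n `<=` U.

Definition Phi (w : nat -> X) : set (nat -> X) := bclass w.

End Martin.

From Pilot Require Import Defs.
From HB Require Import structures.
From mathcomp Require Import all_boot all_order all_algebra.
From mathcomp Require Import complex finmap.
From mathcomp Require Import all_classical all_reals all_analysis.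
From mathcomp Require Import lra.

Import Order.TTheory GRing.Theory Num.Theory.
Import numFieldNormedType.Exports.

Local Open Scope classical_set_scope.
Local Open Scope ring_scope.

Set Implicit Arguments.
Unset Strict Implicit.
Unset Printing Implicit Defensive.

(* Since x0 is regular, T(x0) is a tree in which every point q has a unique
   level n(q), and a walk of the chain only moves up one level at a time, so
   g(q, y) is the product of the weights W along the branch from y down to q
   when q is an ancestor of y, and 0 otherwise.  Hence K(q, y) = C_q or 0
   according as q is an ancestor of y, and rho(y, z) is at least
   D(q) C_q / (C_q + 1) as soon as q is an ancestor of exactly one of y, z,
   while it is at most the tail sum of D over the levels above the last level
   where y and z have the same ancestor.  Therefore a rho-Cauchy sequence
   leaving every finite set eventually has a fixed ancestor at each level;
   these ancestors form the unique path in Omega equivalent to it, and balls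
   of the boundary metric correspond to cylinders. *)

Lemma finite_set_bounded (T : choiceType) (F : set T) (f : T -> nat) :
  finite_set F -> exists N, forall q, F q -> (f q <= N)%N.
Proof.
move=> fF; exists (\max_(q <- fset_set F) f q) => q Fq.
by apply: (@leq_bigmax_seq _ _ xpredT) => //; rewrite in_fset_set // mem_set.
Qed.

Lemma cauchy_seq_cvg (R : realType) (u : nat -> R) :
  (forall e, 0 < e -> exists N, forall m n, (N <= m)%N -> (N <= n)%N ->
     `|u m - u n| < e) ->
  cvg (u @ \oo).
Proof.
move=> h; apply/cauchy_cvgP; apply/cauchyP => e e0.
have [N hN] := h e e0; exists (u N).
by exists N => // n hn /=; rewrite /ball /= hN.
Qed.

Lemma esum_tail_lt (R : realType) (T : choiceType) (S : set T) (f : T -> R)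
    (lev : T -> nat) :
  (forall q, S q -> 0 <= f q) -> (\esum_(q in S) (f q)%:E < +oo)%E ->
  forall e, 0 < e -> exists N,
    (\esum_(q in S) (if (N <= lev q)%N then f q else 0)%:E < e%:E)%E.
Proof.
move=> f_ge0 f_sum e e0.
have f_ge0E q : S q -> (0 <= (f q)%:E)%E by move=> Sq; rewrite lee_fin f_ge0.
set s := (\esum_(q in S) (f q)%:E)%E in f_sum.
have s_fin : s \is a fin_num by rewrite ge0_fin_numE // esum_ge0.
have : ((fine s - e)%:E < s)%E by rewrite -{2}(fineK s_fin) lte_fin gtrBl.
rewrite {2}/s => /ereal_sup_gt [_ [F [fF FS] <-]] sF.
have [M hM] := finite_set_bounded lev fF.
exists M.+1.
set B := [set q | (M.+1 <= lev q)%N].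
have tailE : (\esum_(q in S `&` B) (f q)%:E =
    \esum_(q in S) (if (M.+1 <= lev q)%N then f q else 0)%:E)%E.
  rewrite esum_mkcondr; apply: eq_esum => q _.
  rewrite (_ : (q \in B) = (M.+1 <= lev q)%N); first by case: ifP.
  by apply/idP/idP => [/set_mem|/mem_set].
set a := (\esum_(q in S) (if (M.+1 <= lev q)%N then f q else 0)%:E)%E.
set b := (\esum_(q in S `&` ~` B) (f q)%:E)%E.
have s_ab : s = (a + b)%E by rewrite /s (esumID B) // tailE.
have Fb : (\sum_(q \in F) (f q)%:E <= b)%E.
  apply: esum_ge; exists F => //; split => // q Fq; split; first exact: FS.
  by apply/negP; rewrite -leqNgt hM.
have a0 : (0 <= a)%E by apply: esum_ge0 => q Sq; case: ifP; rewrite lee_fin // f_ge0.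
have b0 : (0 <= b)%E by apply: esum_ge0 => q [Sq _]; exact: f_ge0E.
have a_fin : a \is a fin_num.
  by rewrite ge0_fin_numE //; apply: le_lt_trans f_sum; rewrite s_ab leeDl.
have b_fin : b \is a fin_num.
  by rewrite ge0_fin_numE //; apply: le_lt_trans f_sum; rewrite s_ab leeDr.
have s_sum : fine s = fine a + fine b by apply: EFin_inj; rewrite EFinD !fineK.
have : fine s - e < fine b by rewrite -lte_fin fineK //; exact: lt_le_trans sF Fb.
by rewrite -(fineK a_fin) lte_fin; lra.
Qed.

Section MartinBoundary.
Variables (R : realType) (X : metricType R) (r : X -> X) (m0 : X -> R[i]).
Variables (x0 : X) (D : X -> R).
Hypothesis finite_fibres : forall x : X, finite_set (r @^-1` [set x]).
Hypothesis x0_regular : regular r m0 x0.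
Hypothesis D_gt0 : forall q, tree r x0 q -> 0 < D q.
Hypothesis D_summable : (\esum_(q in tree r x0) (D q)%:E < +oo)%E.

Local Notation T := (tree r x0).
Local Notation lev := (nlev r x0).
Local Notation K := (martinK r m0 x0).
Local Notation C := (Ccoef r m0 x0).
Local Notation W := (W r m0).
Local Notation rho := (rho r m0 x0 D).
Local Notation Om := (Omega r x0).
Local Notation Ph := (Phi r m0 x0 D).
Local Notation bdry := (bdry_seq r m0 x0 D).
Local Notation bequiv := (bequiv r m0 x0 D).
Local Notation bdist := (bdist r m0 x0 D).

(** * The tree T(x0) *)

Lemma tree_iter y n : iter n r y = x0 -> T y.
Proof. by exists n. Qed.

Lemma iter_x0_uniq y n m : iter n r y = x0 -> iter m r y = x0 -> n = m.
Proof.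
move=> hn hm; apply/eqP; apply: contraT => /eqP nm.
have : (preim_n r x0 n `&` preim_n r x0 m) y by [].
by rewrite (x0_regular.1 n m nm).
Qed.

Lemma iter_nlev y : T y -> iter (lev y) r y = x0.
Proof. by move=> [n hn]; exact: (@xgetI _ 0%N [set n | iter n r y = x0] n hn). Qed.

Lemma nlev_iter y n : iter n r y = x0 -> lev y = n.
Proof. by move=> hn; exact: iter_x0_uniq (iter_nlev (tree_iter hn)) hn. Qed.

Lemma tree_desc y q j : iter j r y = q -> T q -> T y /\ lev y = (lev q + j)%N.
Proof.
move=> hj hq; have e : iter (lev q + j) r y = x0 by rewrite iterD hj iter_nlev.
by split; [exact: tree_iter e|exact: nlev_iter e].
Qed.

Lemma tree_anc y j : T y -> (j <= lev y)%N ->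
  T (iter j r y) /\ lev (iter j r y) = (lev y - j)%N.
Proof.
move=> hy hj; have e : iter (lev y - j) r (iter j r y) = x0.
  by rewrite -iterD subnK // iter_nlev.
by split; [exact: tree_iter e|exact: nlev_iter e].
Qed.

Lemma iter_tree_uniq x y j k : T x -> iter j r y = x -> iter k r y = x -> j = k.
Proof.
move=> hx hj hk.
have := @iter_x0_uniq y (lev x + j) (lev x + k).
rewrite !iterD hj hk iter_nlev // => /(_ erefl erefl) /eqP.
by rewrite eqn_add2l => /eqP.
Qed.

Lemma finite_preim_n k : finite_set (preim_n r x0 k).
Proof.
elim: k => [|k IH].
  by apply: (sub_finite_set (B := [set x0])) => // z; rewrite /preim_n /= => ->.
apply: (sub_finite_set (B := \bigcup_(x in preim_n r x0 k) (r @^-1` [set x]))).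
  by move=> z hz; exists (r z) => //=; rewrite /preim_n /= -iterSr.
by apply: bigcup_finite => // x _; exact: finite_fibres.
Qed.

Lemma finite_low_levels k : finite_set [set q | T q /\ (lev q < k)%N].
Proof.
elim: k => [|k IH]; first by apply: (sub_finite_set (B := set0)) => // q [].
apply: (sub_finite_set (B := [set q | T q /\ (lev q < k)%N] `|` preim_n r x0 k)).
  move=> q [hq]; rewrite ltnS leq_eqVlt => /orP [/eqP e|h]; last by left.
  by right; rewrite /preim_n /= -e iter_nlev.
by rewrite finite_setU; split => //; exact: finite_preim_n.
Qed.

Definition anc (q y : X) := exists j, iter j r y = q.

Lemma anc_r q y : anc q y -> anc (r q) y.
Proof. by move=> [j hj]; exists j.+1; rewrite iterS hj. Qed.

Lemma anc_uniq q q' y : T q -> T q' -> lev q = lev q' ->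
  anc q y -> anc q' y -> q = q'.
Proof.
move=> hq hq' el [j hj] [j' hj'].
have [_ e1] := tree_desc hj hq; have [_ e2] := tree_desc hj' hq'.
move: e1; rewrite e2 el => /eqP; rewrite eqn_add2l => /eqP ejj.
by rewrite -hj -hj' ejj.
Qed.

(** * The Martin kernel on the tree *)

Lemma W_ge0 y : 0 <= W y.
Proof. by rewrite /Defs.W divr_ge0 // /sqnorm addr_ge0 // sqr_ge0. Qed.

Lemma W_gt0 y : T y -> 0 < W y.
Proof.
move=> hy; rewrite lt_def W_ge0 andbT; apply: (x0_regular.2 (lev y)).
exact: iter_nlev.
Qed.

Definition Wprod n y := \prod_(i < n) W (iter i r y).

Lemma Wprod_ge0 n y : 0 <= Wprod n y.
Proof. by apply: prodr_ge0 => i _; exact: W_ge0. Qed.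

Lemma Wprod_gt0 n y : T y -> (n <= lev y)%N -> 0 < Wprod n y.
Proof.
move=> hy hn; apply: prodr_gt0 => i _; apply: W_gt0.
exact: (tree_anc hy (leq_trans (ltnW (ltn_ord i)) hn)).1.
Qed.

Lemma WprodS n y : Wprod n.+1 y = W y * Wprod n (r y).
Proof.
rewrite /Wprod big_ord_recl /=; congr (_ * _).
by apply: eq_bigr => i _; rewrite -iterS iterSr.
Qed.

Lemma Ccoef_gt0 q : T q -> 0 < C q.
Proof. by move=> hq; rewrite /Ccoef invr_gt0; exact: Wprod_gt0. Qed.

Lemma pn_tree n x y : T x ->
  pn r m0 x0 n x y = ((iter n r y == x)%:R * Wprod n y)%:E.
Proof.
move=> hx; elim: n y => [|n IH] y /=; first by rewrite /Wprod big_ord0 mulr1 eq_sym.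
have pn_ge0 z : T z -> (0 <= pn r m0 x0 n x z * (pmat r m0 z y)%:E)%E.
  move=> _; rewrite IH -EFinM lee_fin mulr_ge0 ?mulr_ge0 ?Wprod_ge0 //.
  by rewrite /pmat; case: ifP => _ //; exact: W_ge0.
have pmat0 z : z != r y -> pmat r m0 z y = 0.
  by move=> zr; rewrite /pmat ifN // eq_sym.
have [hry|hry] := pselect (T (r y)).
  rewrite (esumID [set r y]) // setIidr; last by move=> z ->.
  rewrite esum_set1; last exact: pn_ge0.
  rewrite esum1 ?adde0; last by move=> z [_ zr]; rewrite pmat0 ?mule0 //; exact/eqP.
  rewrite IH /pmat eqxx -EFinM WprodS -iterS iterSr.
  by congr (_%:E); rewrite -mulrA [W y * _]mulrC.
rewrite esum1; last first.
  by move=> z hz; rewrite pmat0 ?mule0 //; apply/eqP => e; apply: hry; rewrite -e.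
suff /negPf -> : r (iter n r y) != x by rewrite mul0r.
apply/eqP => e; apply: hry; apply: (@tree_iter _ (lev x + n)).
by rewrite iterD -iterSr iterS e iter_nlev.
Qed.

Lemma green_anc x y j : T x -> iter j r y = x -> green r m0 x0 x y = (Wprod j y)%:E.
Proof.
move=> hx hj.
have pn_other i : i != j -> pn r m0 x0 i x y = 0%E.
  move=> ij; rewrite pn_tree //; suff /negPf -> : iter i r y != x by rewrite mul0r.
  by apply: contra ij => /eqP e; rewrite (iter_tree_uniq hx e hj).
rewrite /green (nneseries_split _ j.+1); last first.
  by move=> k _; rewrite pn_tree // lee_fin mulr_ge0 // Wprod_ge0.
rewrite add0n eseries0 ?adde0; last by move=> i hi _; rewrite pn_other // gtn_eqF.
rewrite big_nat_recr //= big_nat_cond big1 ?add0e.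
  by rewrite pn_tree // hj eqxx mul1r.
by move=> i /andP[/andP[_ hi] _]; rewrite pn_other // ltn_eqF.
Qed.

Lemma green_nanc x y : T x -> ~ anc x y -> green r m0 x0 x y = 0%E.
Proof.
move=> hx na; rewrite /green eseries0 // => i _ _.
rewrite pn_tree //; suff /negPf -> : iter i r y != x by rewrite mul0r.
by apply/eqP => e; apply: na; exists i.
Qed.

Lemma martinK_anc q y : T q -> T y -> anc q y -> K q y = C q.
Proof.
move=> hq hy [j hj]; have [_ ly] := tree_desc hj hq.
rewrite /martinK (green_anc hq hj) (green_anc (@tree_iter x0 0 erefl) (iter_nlev hy)) /=.
rewrite ly addnC /Wprod big_split_ord /=.
under [X in _ / (_ * X)]eq_bigr => i _ do rewrite addnC iterD hj.
rewrite invfM mulrA mulfV ?mul1r //.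
by apply/lt0r_neq0/(Wprod_gt0 hy); rewrite ly leq_addl.
Qed.

Lemma martinK_nanc q y : T q -> ~ anc q y -> K q y = 0.
Proof. by move=> hq na; rewrite /martinK green_nanc ?mul0r. Qed.

Lemma martinK_C_or_0 q y : T q -> T y -> K q y = C q \/ K q y = 0.
Proof.
move=> hq hy; have [h|h] := pselect (anc q y).
  by left; exact: martinK_anc.
by right; exact: martinK_nanc.
Qed.

(** * The metric rho *)

Definition rho_term (q x y : X) :=
  D q * (`|K q x - K q y| + `|kron q x - kron q y|) / (C q + 1).

Lemma rho_term_ge0 q x y : T q -> 0 <= rho_term q x y.
Proof.
move=> hq; rewrite /rho_term divr_ge0 ?mulr_ge0 ?addr_ge0 //.
  exact: ltW (D_gt0 hq).
exact: ltW (Ccoef_gt0 hq).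
Qed.

Lemma rho_term_le q x y : T q -> T x -> T y -> rho_term q x y <= D q.
Proof.
move=> hq hx hy; have c0 := Ccoef_gt0 hq.
rewrite /rho_term ler_pdivrMr ?addr_gt0 //; apply: ler_wpM2l; first exact: ltW (D_gt0 hq).
apply: lerD.
  by case: (martinK_C_or_0 hq hx) => ->; case: (martinK_C_or_0 hq hy) => ->;
    rewrite ?subrr ?normr0 ?subr0 ?sub0r ?normrN ?gtr0_norm // ltW.
by rewrite /kron; case: (q == x); case: (q == y);
  rewrite ?subrr ?normr0 ?subr0 ?sub0r ?normrN ?normr1.
Qed.

Lemma rho_esum x y : T x -> T y -> (rho x y)%:E = \esum_(q in T) (rho_term q x y)%:E.
Proof.
move=> hx hy; rewrite /Defs.rho fineK // ge0_fin_numE; last first.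
  by apply: esum_ge0 => q hq; rewrite lee_fin rho_term_ge0.
apply: le_lt_trans D_summable; apply: le_esum => q hq.
by rewrite lee_fin rho_term_le.
Qed.

Lemma rho_ge0 x y : 0 <= rho x y.
Proof.
by rewrite /Defs.rho fine_ge0 // esum_ge0 // => q hq; rewrite lee_fin rho_term_ge0.
Qed.

Lemma rho_sym x y : rho x y = rho y x.
Proof.
rewrite /Defs.rho; congr fine; apply: eq_esum => q _.
by rewrite (distrC (K q x)) (distrC (kron q x)).
Qed.

Lemma rho_xx x : rho x x = 0.
Proof.
rewrite /Defs.rho esum1 // => q _.
by rewrite !subrr normr0 addr0 mulr0 mul0r.
Qed.

Lemma rho_triangle x y z : T x -> T y -> T z -> rho x z <= rho x y + rho y z.
Proof.
move=> hx hy hz; rewrite -lee_fin EFinD !rho_esum // -esumD; last 2 first.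
- by move=> q hq; rewrite lee_fin rho_term_ge0.
- by move=> q hq; rewrite lee_fin rho_term_ge0.
apply: le_esum => q hq; have c0 := Ccoef_gt0 hq.
rewrite -EFinD lee_fin /rho_term -mulrDl ler_pM2r ?invr_gt0 ?addr_gt0 //.
rewrite -mulrDr; apply: ler_wpM2l; first exact: ltW (D_gt0 hq).
by rewrite addrACA; apply: lerD; exact: ler_distD.
Qed.

Lemma rho_quad a b c d : T a -> T b -> T c -> T d ->
  `|rho a b - rho c d| <= rho a c + rho b d.
Proof.
move=> ta tb tc td.
have := rho_triangle ta tc tb; have := rho_triangle tc td tb.
have := rho_triangle tc ta td; have := rho_triangle ta tb td.
rewrite (rho_sym d b) (rho_sym c a) ler_norml; lra.
Qed.

Definition sep q := D q * C q / (C q + 1).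

Lemma sep_gt0 q : T q -> 0 < sep q.
Proof.
by move=> hq; have c0 := Ccoef_gt0 hq; rewrite /sep divr_gt0 ?mulr_gt0 ?addr_gt0 ?D_gt0.
Qed.

(* K q x != K q y exactly when q is an ancestor of only one of x, y. *)
Lemma sep_le_rho q x y : T q -> T x -> T y -> K q x != K q y -> sep q <= rho x y.
Proof.
move=> hq hx hy hK; have c0 := Ccoef_gt0 hq.
apply: (@le_trans _ _ (rho_term q x y)).
  rewrite /sep /rho_term ler_pM2r ?invr_gt0 ?addr_gt0 // ler_pM2l ?D_gt0 //.
  suff -> : `|K q x - K q y| = C q by rewrite lerDl.
  by move: hK; case: (martinK_C_or_0 hq hx) => ->; case: (martinK_C_or_0 hq hy) => ->;
    rewrite ?eqxx // ?subr0 ?sub0r ?normrN ?gtr0_norm.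
rewrite -lee_fin rho_esum //; apply: esum_ge; exists [set q].
  by split; [exact: finite_set1|move=> z ->].
by rewrite fsbig_set1.
Qed.

Definition Dtail N q := if (N <= lev q)%N then D q else 0.

Lemma Dtail_small e : 0 < e -> exists N, (\esum_(q in T) (Dtail N q)%:E < e%:E)%E.
Proof.
apply: (esum_tail_lt lev _ D_summable) => q hq; exact: ltW (D_gt0 hq).
Qed.

Lemma rho_le_Dtail N x y : T x -> T y ->
  (forall q, T q -> (lev q < N)%N -> rho_term q x y = 0) ->
  ((rho x y)%:E <= \esum_(q in T) (Dtail N q)%:E)%E.
Proof.
move=> hx hy low0; rewrite rho_esum //; apply: le_esum => q hq; rewrite lee_fin /Dtail.
by case: ltnP => hl; [rewrite low0|rewrite rho_term_le].
Qed.

(** * Paths in Omega *)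

Lemma Omega_iter w j n : Om w -> iter j r (w (j + n)%N) = w n.
Proof. by move=> [_ hw]; elim: j => [|j IH] //; rewrite iterSr addSn hw. Qed.

Lemma Omega_tree w n : Om w -> T (w n) /\ lev (w n) = n.
Proof.
move=> hw; have e : iter n r (w n) = x0.
  by rewrite -[in w n](addn0 n) Omega_iter //; case: hw.
by split; [exact: tree_iter e|exact: nlev_iter e].
Qed.

Lemma Omega_below w k n : Om w -> (k <= n)%N -> w k = iter (n - k) r (w n).
Proof. by move=> hw hk; rewrite -{2}(subnK hk) Omega_iter. Qed.

Lemma Omega_anc w q m : Om w -> T q ->
  anc q (w m) <-> (lev q <= m)%N /\ q = w (lev q).
Proof.
move=> hw hq; split.
  move=> [j hj]; have [_ e] := tree_desc hj hq.
  rewrite (Omega_tree m hw).2 in e.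
  split; first by rewrite e leq_addr.
  by rewrite -{1}hj e [(lev q + j)%N]addnC Omega_iter.
by move=> [hl ->]; exists (m - lev q)%N; rewrite -Omega_below.
Qed.

Lemma martinK_Omega w q m : Om w -> T q ->
  K q (w m) = if (lev q <= m)%N && (q == w (lev q)) then C q else 0.
Proof.
move=> hw hq; case: ifP => [/andP[h1 /eqP h2]|h].
  by apply: martinK_anc => //; [exact: (Omega_tree m hw).1|apply/Omega_anc].
by apply: martinK_nanc => // /(Omega_anc m hw hq) [h1 h2]; move: h; rewrite h1 -h2 eqxx.
Qed.

Lemma kron_Omega w q m : Om w -> (lev q < m)%N -> kron q (w m) = 0.
Proof.
move=> hw hm; rewrite /kron; case: eqP => // e.
by move: hm; rewrite e (Omega_tree m hw).2 ltnn.
Qed.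

Lemma rho_Omega_le_Dtail w w' n m m' : Om w -> Om w' -> w n = w' n ->
  (n <= m)%N -> (n <= m')%N ->
  ((rho (w m) (w' m'))%:E <= \esum_(q in T) (Dtail n q)%:E)%E.
Proof.
move=> hw hw' hn hm hm'.
apply: rho_le_Dtail; [exact: (Omega_tree m hw).1|exact: (Omega_tree m' hw').1|].
move=> q hq hlt.
have ew : w (lev q) = w' (lev q).
  by rewrite (Omega_below hw (ltnW hlt)) (Omega_below hw' (ltnW hlt)) hn.
rewrite /rho_term (martinK_Omega m hw hq) (martinK_Omega m' hw' hq) ew.
rewrite (kron_Omega hw (leq_trans hlt hm)) (kron_Omega hw' (leq_trans hlt hm')).
rewrite (leq_trans (ltnW hlt) hm) (leq_trans (ltnW hlt) hm').
by rewrite !subrr normr0 addr0 mulr0 mul0r.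
Qed.

Lemma sep_le_rho_Omega w w' k m : Om w -> Om w' -> w k <> w' k -> (k <= m)%N ->
  sep (w k) <= rho (w m) (w' m).
Proof.
move=> hw hw' hk hm; have [tk lk] := Omega_tree k hw.
apply: sep_le_rho => //; [exact: (Omega_tree m hw).1|exact: (Omega_tree m hw').1|].
rewrite (martinK_Omega m hw tk) (martinK_Omega m hw' tk) lk hm eqxx /=.
by rewrite (introF eqP hk) lt0r_neq0 // Ccoef_gt0.
Qed.

Lemma Omega_bdry_seq w : Om w -> bdry w.
Proof.
move=> hw; split.
- by move=> n; exact: (Omega_tree n hw).1.
- move=> e e0; have [N hN] := Dtail_small e0; exists N => m n hm hn.
  by rewrite -lte_fin; apply: le_lt_trans hN; exact: rho_Omega_le_Dtail.
- move=> F fF; have [M hM] := finite_set_bounded lev fF; exists M.+1 => n hn Fn.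
  by move: (hM _ Fn); rewrite (Omega_tree n hw).2 leqNgt hn.
- move=> x hx; exists (if x == w (lev x) then C x else 0).
  apply: cvg_near_cst; exists (lev x) => // n hn.
  by rewrite (martinK_Omega n hw hx) hn.
Qed.

Lemma bequivP y z :
  bequiv y z <-> forall e, 0 < e -> \forall n \near \oo, rho (y n) (z n) < e.
Proof.
rewrite /Defs.bequiv cvgrPdist_lt; split => h e e0; apply: filterS (h e e0) => n;
  by rewrite sub0r normrN ger0_norm // rho_ge0.
Qed.

Lemma bequiv_sym y z : bequiv y z -> bequiv z y.
Proof.
move/bequivP => h; apply/bequivP => e e0.
by apply: filterS (h e e0) => n; rewrite rho_sym.
Qed.

Lemma bequiv_trans y z u : (forall n, T (y n)) -> (forall n, T (z n)) ->
  (forall n, T (u n)) -> bequiv y z -> bequiv z u -> bequiv y u.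
Proof.
move=> ty tz tu /bequivP h1 /bequivP h2; apply/bequivP => e e0.
have e2 : 0 < e / 2 by rewrite divr_gt0.
apply: filterS2 (h1 _ e2) (h2 _ e2) => n a b.
apply: le_lt_trans (rho_triangle (ty n) (tz n) (tu n)) _.
by rewrite (splitr e) ltrD.
Qed.

Lemma bclass_self y : bdry y -> bclass r m0 x0 D y y.
Proof.
by move=> hy; split => //; apply/bequivP => e e0; exists 0%N => // n _; rewrite rho_xx.
Qed.

Lemma rep_bclass y : bdry y -> bclass r m0 x0 D y (rep x0 (bclass r m0 x0 D y)).
Proof. by move=> hy; apply: xgetI; exact: bclass_self. Qed.

Lemma cvg_rho_bdry_seq a b : bdry a -> bdry b -> cvg ((fun n => rho (a n) (b n)) @ \oo).
Proof.
move=> [ta ca _ _] [tb cb _ _]; apply: cauchy_seq_cvg => e e0.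
have e2 : 0 < e / 2 by rewrite divr_gt0.
have [N1 h1] := ca _ e2; have [N2 h2] := cb _ e2.
exists (maxn N1 N2) => m n; rewrite !geq_max => /andP[m1 m2] /andP[n1 n2].
have := rho_quad (ta m) (tb m) (ta n) (tb n).
have := h1 m n m1 n1; have := h2 m n m2 n2; lra.
Qed.

Lemma bdist_bclass y y' : bdry y -> bdry y' ->
  bdist (bclass r m0 x0 D y) (bclass r m0 x0 D y') =
  lim ((fun n => rho (y n) (y' n)) @ \oo).
Proof.
move=> hy hy'; have /cvgrPdist_lt hv := cvg_rho_bdry_seq hy hy'.
set l := lim _ in hv *.
have [ba /bequivP ea] := rep_bclass hy; have [bb /bequivP eb] := rep_bclass hy'.
set a := rep x0 _ in ba ea; set b := rep x0 _ in bb eb.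
rewrite /Defs.bdist -/a -/b; apply: cvg_lim => //; apply/cvgrPdist_lt => e e0.
have e3 : 0 < e / 3 by rewrite divr_gt0.
have [[ty _ _ _] [ty' _ _ _]] := (hy, hy'); have [[ta _ _ _] [tb _ _ _]] := (ba, bb).
have thirds : e / 3 + (e / 3 + e / 3) = e by lra.
apply: filterS2 (hv _ e3) (filterI (ea _ e3) (eb _ e3)) => n d1 [d2 d3].
apply: le_lt_trans (ler_distD (rho (y n) (y' n)) l (rho (a n) (b n))) _.
rewrite -thirds; apply: ltrD d1 (le_lt_trans (rho_quad (ty n) (ty' n) (ta n) (tb n)) _).
exact: (ltrD d2 d3).
Qed.

Lemma bdist_Phi_ge w w' e : Om w -> Om w' ->
  (\forall n \near \oo, e <= rho (w n) (w' n)) -> e <= bdist (Ph w) (Ph w').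
Proof.
move=> hw hw' h; rewrite /Phi bdist_bclass; try exact: Omega_bdry_seq.
by apply: limr_ge h; exact: cvg_rho_bdry_seq (Omega_bdry_seq hw) (Omega_bdry_seq hw').
Qed.

Lemma bdist_Phi_le w w' e : Om w -> Om w' ->
  (\forall n \near \oo, rho (w n) (w' n) <= e) -> bdist (Ph w) (Ph w') <= e.
Proof.
move=> hw hw' h; rewrite /Phi bdist_bclass; try exact: Omega_bdry_seq.
by apply: limr_le h; exact: cvg_rho_bdry_seq (Omega_bdry_seq hw) (Omega_bdry_seq hw').
Qed.

(** * Phi is a bijection *)

Lemma Phi_inj w w' : Om w -> Om w' -> Ph w = Ph w' -> w = w'.
Proof.
move=> hw hw' e.
have : Ph w w' by rewrite e; exact: bclass_self (Omega_bdry_seq hw').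
move=> [_ /bequivP hb]; apply/funext => k; apply: contrapT => hk.
have [N _ hN] := hb _ (sep_gt0 (Omega_tree k hw).1).
have := hN (maxn N k) (leq_maxl _ _).
by rewrite ltNge (sep_le_rho_Omega hw hw' hk (leq_maxr _ _)).
Qed.

Section LimitPath.
Variable y : nat -> X.
Hypothesis y_bdry : bdry y.

Lemma tree_bdry_seq n : T (y n).
Proof. by case: y_bdry. Qed.

Lemma anc_stable q : T q -> exists N, forall m n, (N <= m)%N -> (N <= n)%N ->
  anc q (y n) -> anc q (y m).
Proof.
move=> hq; have [_ cy _ _] := y_bdry; have [N hN] := cy _ (sep_gt0 hq).
exists N => m n hm hn an; apply: contrapT => am.
have := hN m n hm hn.
rewrite ltNge (sep_le_rho hq (tree_bdry_seq m) (tree_bdry_seq n)) //.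
rewrite (martinK_nanc hq am) (martinK_anc hq (tree_bdry_seq n) an) eq_sym.
exact: lt0r_neq0 (Ccoef_gt0 hq).
Qed.

Lemma nlev_bdry_seq_ge k : \forall n \near \oo, (k <= lev (y n))%N.
Proof.
have [_ _ ly _] := y_bdry; have [N hN] := ly _ (finite_low_levels k).
exists N => // n hn; rewrite leqNgt; apply/negP => hl.
by apply: (hN n hn); split => //; exact: tree_bdry_seq.
Qed.

(* Take N beyond the stabilisation indices of the finitely many points of
   level k; the ancestor of y N at level k is then an ancestor of all later y n. *)
Lemma exists_stable_anc k :
  exists q, T q /\ lev q = k /\ \forall n \near \oo, anc q (y n).
Proof.
pose stab q := xget 0%N [set N | forall m n, (N <= m)%N -> (N <= n)%N ->
  anc q (y n) -> anc q (y m)].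
have stabP q : T q -> forall m n, (stab q <= m)%N -> (stab q <= n)%N ->
    anc q (y n) -> anc q (y m).
  move=> hq; have [N hN] := anc_stable hq.
  exact: (@xgetI _ 0%N [set N | forall m n, (N <= m)%N -> (N <= n)%N ->
    anc q (y n) -> anc q (y m)] N hN).
have [N0 hN0] := finite_set_bounded stab (finite_preim_n k).
have [N1 _ hN1] := nlev_bdry_seq_ge k.
set N := maxn N0 N1.
have hk : (k <= lev (y N))%N by apply: hN1; exact: leq_maxr.
set q := iter (lev (y N) - k) r (y N).
have [tq lq] := tree_anc (tree_bdry_seq N) (leq_subr k (lev (y N))).
rewrite subKn // in lq.
have Lq : preim_n r x0 k q by rewrite /preim_n /= -lq iter_nlev.
have hq : (stab q <= N)%N by apply: leq_trans (hN0 _ Lq) _; exact: leq_maxl.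
exists q; split => //; split => //.
exists N => // n hn; apply: (stabP q tq n N) => //; first exact: leq_trans hq hn.
by exists (lev (y N) - k)%N.
Qed.

Definition limit_path k :=
  xget x0 [set q | T q /\ lev q = k /\ \forall n \near \oo, anc q (y n)].

Lemma limit_pathP k :
  T (limit_path k) /\ lev (limit_path k) = k /\
  \forall n \near \oo, anc (limit_path k) (y n).
Proof.
exact: (@xgetPex _ x0 [set q | T q /\ lev q = k /\ \forall n \near \oo, anc q (y n)]
  (exists_stable_anc k)).
Qed.

Lemma limit_path_eq k q : T q -> lev q = k ->
  (\forall n \near \oo, anc q (y n)) -> limit_path k = q.
Proof.
move=> hq lq eq; have [tw [lw ew]] := limit_pathP k.
have [n _ hn] := filterI ew eq.
have [h1 h2] := hn n (leqnn n).
by apply: anc_uniq tw hq _ h1 h2; rewrite lw lq.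
Qed.

Lemma limit_path_Omega : Om limit_path.
Proof.
split.
  apply: limit_path_eq (@tree_iter x0 0 erefl) (@nlev_iter x0 0 erefl) _.
  by exists 0%N => // n _; exists (lev (y n)); exact: iter_nlev (tree_bdry_seq n).
move=> k; have [tw [lw ew]] := limit_pathP k.+1.
have h1 : (1 <= lev (limit_path k.+1))%N by rewrite lw.
have [t1] := tree_anc tw h1; rewrite lw subn1 /= => l1.
by apply: esym; apply: limit_path_eq t1 l1 _; apply: filterS ew => n; exact: anc_r.
Qed.

Lemma bequiv_limit_path : bequiv y limit_path.
Proof.
have hw := limit_path_Omega.
apply/bequivP => e e0; have [N hN] := Dtail_small e0.
have [tN [lN ev]] := limit_pathP N.
apply: filterS2 (filterI ev (nbhs_infty_ge N)) (nlev_bdry_seq_ge N) => n [[j hj] hnN] _.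
have [_ ly] := tree_desc hj tN.
rewrite -lte_fin; apply: le_lt_trans hN.
apply: rho_le_Dtail; [exact: tree_bdry_seq|exact: (Omega_tree n hw).1|].
move=> q hq hlt.
have hanc : anc (limit_path (lev q)) (y n).
  by exists ((N - lev q) + j)%N; rewrite iterD hj -(Omega_below hw (ltnW hlt)).
have hK : K q (y n) = K q (limit_path n).
  rewrite (martinK_Omega n hw hq) (leq_trans (ltnW hlt) hnN) /=.
  case: ifP => [/eqP eq|/negP ne].
    by apply: martinK_anc => //; [exact: tree_bdry_seq|rewrite eq].
  apply: martinK_nanc => // aq; apply: ne; apply/eqP.
  apply: anc_uniq hq _ _ aq hanc; first exact: (Omega_tree _ hw).1.
  by rewrite (Omega_tree _ hw).2.
have k1 : kron q (y n) = 0.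
  by rewrite /kron; case: eqP => // eq; move: hlt; rewrite eq ly lN ltnNge leq_addr.
rewrite /rho_term hK k1 (kron_Omega hw (leq_trans hlt hnN)).
by rewrite !subrr normr0 addr0 mulr0 mul0r.
Qed.

End LimitPath.

Lemma Phi_surj c : boundary r m0 x0 D c -> exists2 w, Om w & Ph w = c.
Proof.
move=> [y [hy ->]]; exists (limit_path y); first exact: limit_path_Omega.
have hb := bequiv_limit_path hy.
have tw n := (Omega_tree n (limit_path_Omega hy)).1.
have ty := tree_bdry_seq hy.
apply/seteqP; split => z [bz hz]; have tz : forall n, T (z n) by case: bz.
  by split => //; exact: bequiv_trans ty tw tz hb hz.
by split => //; exact: bequiv_trans tw ty tz (bequiv_sym hb) hz.
Qed.

Lemma Phi_bij : set_bij Om (boundary r m0 x0 D) Ph.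
Proof.
split.
- by move=> w hw; exists w; split => //; exact: Omega_bdry_seq.
- by move=> w w' /set_mem hw /set_mem hw' e; exact: Phi_inj.
- by move=> c /Phi_surj [w hw e]; exists w.
Qed.

(** * Phi is a homeomorphism *)

Lemma Omega_eq_of_bdist_lt w w' n : Om w -> Om w' ->
  bdist (Ph w) (Ph w') < sep (w n) -> forall k, (k <= n)%N -> w' k = w k.
Proof.
move=> hw hw' hd k hk.
suff wn : w' n = w n by rewrite (Omega_below hw' hk) wn -Omega_below.
apply: contrapT => hne; move: hd; rewrite ltNge => /negP; apply.
apply: bdist_Phi_ge => //; exists n => // m hm.
by apply: sep_le_rho_Omega => // e; apply: hne.
Qed.

Lemma bdist_Phi_le_Dtail w w' n e : Om w -> Om w' -> w n = w' n ->
  (\esum_(q in T) (Dtail n q)%:E < e%:E)%E -> bdist (Ph w) (Ph w') <= e.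
Proof.
move=> hw hw' hn he; apply: bdist_Phi_le => //; exists n => // m hm.
rewrite -lee_fin; apply: ltW; apply: le_lt_trans he.
exact: rho_Omega_le_Dtail.
Qed.

Lemma Phi_open_of_Omega_open U : U `<=` Om -> Omega_open r x0 U ->
  boundary_open r m0 x0 D (Ph @` U).
Proof.
move=> UO [_ hU]; split.
  by move=> c [w Uw <-]; exists w; split => //; exact: Omega_bdry_seq (UO _ Uw).
move=> c [w Uw <-]; have hw := UO _ Uw.
have [s [n [[_ hs] sub]]] := hU w Uw.
exists (sep (w n)); split; first exact: sep_gt0 (Omega_tree n hw).1.
move=> c' /Phi_surj [w' hw' <-] hd; exists w' => //; apply: sub; split => // k hk.
by rewrite (Omega_eq_of_bdist_lt hw hw' hd hk) hs.
Qed.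

Lemma Omega_open_of_Phi_open U : U `<=` Om ->
  boundary_open r m0 x0 D (Ph @` U) -> Omega_open r x0 U.
Proof.
move=> UO [_ hB]; split => // w Uw; have hw := UO _ Uw.
have [e [e0 he]] := hB (Ph w) (ex_intro2 _ _ w Uw erefl).
have e2 : 0 < e / 2 by rewrite divr_gt0.
have [N hN] := Dtail_small e2.
exists w, N; split; first by split.
move=> w' [hw' hag].
have bw' : boundary r m0 x0 D (Ph w') by exists w'; split => //; exact: Omega_bdry_seq.
have hd : bdist (Ph w) (Ph w') < e.
  have wN : w N = w' N by rewrite hag.
  apply: le_lt_trans (bdist_Phi_le_Dtail hw hw' wN hN) _.
  by rewrite ltr_pdivrMr // ltr_pMr // ltr1n.
have [u Uu eu] := he _ bw' hd.
by rewrite -(Phi_inj (UO _ Uu) hw' eu).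
Qed.

Lemma martinKb_Phi x w : T x -> Om w ->
  martinKb r m0 x0 x (Ph w) = if x == w (lev x) then C x else 0.
Proof.
move=> hx hw; have [[ta _ _ _] /bequivP ea] := rep_bclass (Omega_bdry_seq hw).
rewrite /martinKb /Phi; apply: cvg_lim => //; apply: cvg_near_cst.
apply: filterS2 (ea _ (sep_gt0 hx)) (nbhs_infty_ge (lev x)) => n close hn.
have -> : K x (rep x0 (bclass r m0 x0 D w) n) = K x (w n).
  apply/eqP; apply: contraT => hne; move: close.
  by rewrite ltNge (sep_le_rho hx (Omega_tree n hw).1 (ta n)) // eq_sym.
by rewrite (martinK_Omega n hw hx) hn.
Qed.

Lemma Ccoef_Omega w n : Om w -> C (w n) = (\prod_(1 <= i < n.+1) W (w i))^-1.
Proof.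
move=> hw; rewrite /Ccoef (Omega_tree n hw).2; congr (_^-1).
rewrite /Wprod -(big_mkord xpredT (fun i => W (iter i r (w n)))) big_add1 /=.
rewrite big_nat_rev /=; apply: eq_big_nat => i /andP[_ hi].
by rewrite add0n (Omega_below hw hi).
Qed.

Lemma martinKb_Phi_on_path x w n : Om w -> x = w n ->
  martinKb r m0 x0 x (Ph w) = (\prod_(1 <= i < n.+1) W (w i))^-1.
Proof.
move=> hw ->; have [tn ln] := Omega_tree n hw.
by rewrite martinKb_Phi // ln eqxx Ccoef_Omega.
Qed.

Lemma martinKb_Phi_off_path x w : T x -> Om w -> (forall n, x <> w n) ->
  martinKb r m0 x0 x (Ph w) = 0.
Proof. by move=> hx hw off; rewrite martinKb_Phi // (introF eqP (off _)). Qed.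

End MartinBoundary.

Theorem theorem4p4 (R : realType) (X : metricType R)
  (r : X -> X) (m0 : X -> R[i]) (x0 : X) (D : X -> R) :
  compact [set: X] ->
  (* r finite-to-one, onto, Borel *)
  (forall x : X, finite_set (r @^-1` [set x])) ->
  (forall x : X, exists y : X, r y = x) ->
  borel_fun r ->
  (* m0 Borel (i.e. its real and imaginary parts are Borel) *)
  borel_fun (fun x => complex.Re (m0 x)) ->
  borel_fun (fun x => complex.Im (m0 x)) ->
  (* normalization of m0 *)
  (forall x : X, (npre r x)%:R^-1 *
      (\sum_(y \in r @^-1` [set x]) sqnorm (m0 y)) = 1) ->
  (* x0 regular *)
  regular r m0 x0 ->
  (* D : T(x0) -> (0, oo) summable *)
  (forall q, tree r x0 q -> 0 < D q) ->
  (\esum_(q in tree r x0) (D q)%:E < +oo)%E ->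
  [/\ (* Phi is well defined *)
      (forall w, Omega r x0 w -> bdry_seq r m0 x0 D w),
      (* Phi is a bijection from Omega onto the Martin boundary *)
      set_bij (Omega r x0) (boundary r m0 x0 D) (@Phi R X r m0 x0 D),
      (* Phi is a homeomorphism *)
      (forall U, U `<=` Omega r x0 ->
         (Omega_open r x0 U <->
          boundary_open r m0 x0 D (@Phi R X r m0 x0 D @` U))) &
      (* formula for the Martin kernel on the boundary *)
      (forall (x : X) (w : nat -> X), tree r x0 x -> Omega r x0 w ->
         (forall n : nat, x = w n ->
            martinKb r m0 x0 x (Phi r m0 x0 D w)
              = (\prod_(1 <= i < n.+1) W r m0 (w i))^-1) /\
         ((forall n : nat, x <> w n) ->
            martinKb r m0 x0 x (Phi r m0 x0 D w) = 0))].
Proof.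
move=> _ fibres _ _ _ _ _ reg D_gt0 D_sum; split.
- exact: Omega_bdry_seq.
- exact: Phi_bij.
- by move=> U UO; split; [exact: Phi_open_of_Omega_open|exact: Omega_open_of_Phi_open].
- move=> x w hx hw; split => [n|].
    exact: martinKb_Phi_on_path.
  exact: martinKb_Phi_off_path.
Qed.
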